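(* Let $n\ge2$, let $f:2^{[n]}\to\mathbb{R}_+$ be monotone submodular, and let $\mathbf{x}=(x,\dots,x)\in[0,1]^n$ with $x\le 1/(n-1)$ or $x\ge(n-2)/(n-1)$. Then $f^{+}(\mathbf{x})/f^{++}(\mathbf{x})\le4/3$ (with the convention $0/0=1$).
   Context: $[n]=\{1,\dots,n\}$. A set function $f:2^{[n]}\to\mathbb{R}_+$ is monotone if $f(S)\le f(T)$ for $S\subseteq T$, submodular if $f(S)+f(T)\ge f(S\cap T)+f(S\cup T)$. For $\mathbf{x}\in[0,1]^n$: the concave closure $f^{+}(\mathbf{x})=\max\sum_{S\subseteq[n]}\theta(S)f(S)$ over $\theta:2^{[n]}\to\mathbb{R}_{\ge0}$ with $\sum_S\theta(S)=1$ and $\sum_{S\ni i}\theta(S)=x_i$ for all $i$; the upper pairwise independent extension $f^{++}(\mathbf{x})$ is the same maximum with the additional constraints $\sum_{S\ni i,j}\theta(S)=x_ix_j$ for all $i<j$. *)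

From HB Require Import structures.
From mathcomp Require Import all_boot all_order all_algebra.
From mathcomp Require Import boolp classical_sets reals.
Set Implicit Arguments. Unset Strict Implicit. Unset Printing Implicit Defensive.
Import Order.TTheory GRing.Theory Num.Theory.
Local Open Scope ring_scope.

Definition monotone_fn (R : realType) (n : nat) (f : {set 'I_n} -> R) :=
  forall S T : {set 'I_n}, S \subset T -> f S <= f T.

Definition submodular_fn (R : realType) (n : nat) (f : {set 'I_n} -> R) :=
  forall S T : {set 'I_n}, f (S :&: T) + f (S :|: T) <= f S + f T.

Definition nonneg_fn (R : realType) (n : nat) (f : {set 'I_n} -> R) :=
  forall S : {set 'I_n}, 0 <= f S.

Definition feasible_plus (R : realType) (n : nat) (x : 'I_n -> R)
  (theta : {set 'I_n} -> R) :=
  [/\ forall S, 0 <= theta S,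
      \sum_(S : {set 'I_n}) theta S = 1 &
      forall i : 'I_n, \sum_(S : {set 'I_n} | i \in S) theta S = x i].

Definition feasible_pplus (R : realType) (n : nat) (x : 'I_n -> R)
  (theta : {set 'I_n} -> R) :=
  feasible_plus x theta /\
  forall i j : 'I_n, (i < j)%N ->
    \sum_(S : {set 'I_n} | (i \in S) && (j \in S)) theta S = x i * x j.

Definition objective (R : realType) (n : nat) (f : {set 'I_n} -> R)
  (theta : {set 'I_n} -> R) := \sum_(S : {set 'I_n}) theta S * f S.

(* the maximum is taken as a supremum (it is attained: compact polytope) *)
Definition concave_closure (R : realType) (n : nat) (f : {set 'I_n} -> R)
  (x : 'I_n -> R) : R :=
  sup [set v | exists theta, feasible_plus x theta /\ v = objective f theta].

Definition upper_pairwise_ext (R : realType) (n : nat) (f : {set 'I_n} -> R)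
  (x : 'I_n -> R) : R :=
  sup [set v | exists theta, feasible_pplus x theta /\ v = objective f theta].

From HB Require Import structures.
From mathcomp Require Import all_boot all_order all_algebra.
From mathcomp Require Import boolp classical_sets reals.
From mathcomp Require Import ring lra.
(* Re-imported so that its lemma names shadow those of classical_sets. *)
From mathcomp Require Import finset.
Import Order.TTheory GRing.Theory Num.Theory.
Local Open Scope ring_scope.

Set Implicit Arguments. Unset Strict Implicit. Unset Printing Implicit Defensive.

(* Submodularity bounds f above by two modular functions, one tight at the
   empty set, f S <= f set0 + sum_(i in S) (f [set i] - f set0), and one tight
   at the full set (the same bound for S |-> f (~: S)).  Averaging them over any
   distribution with marginals x bounds f^+(x) by min (F, f set0 + x G) and by
   F - (1 - x) D, where F = f [set: 'I_n] and G, D sum the marginal gains at the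
   bottom and at the top.  For f^++(x) one exhibits a pairwise independent
   distribution on the empty set, the full set and either all singletons or all
   co-singletons; its weights are nonnegative exactly when x <= 1/(n-1), resp.
   x >= (n-2)/(n-1).  What remains is an elementary inequality between reals,
   tight at x = 1/2. *)

Section ModularUpperBounds.
Variables (R : realType) (n : nat).
Implicit Types (f : {set 'I_n} -> R) (S : {set 'I_n}).

Lemma submod_le_singletons f S : submodular_fn f ->
  f S <= f set0 + \sum_(i in S) (f [set i] - f set0).
Proof.
move=> f_sub; have [m] := ubnP #|S|; elim: m S => // m IH S /ltnSE S_le.
have [->|[i iS]] := set_0Vmem S; first by rewrite big_set0 addr0.
have S'_lt : (#|S :\ i| < m)%N by move: S_le; rewrite (cardsD1 i) iS.
have disj : (S :\ i) :&: [set i] = set0.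
  by apply/setP => j; rewrite !inE; case: (j == i); rewrite ?andbF.
have := f_sub (S :\ i) [set i]; rewrite disj setUC setD1K //.
have := IH _ S'_lt; rewrite (big_setD1 _ iS) /=; lra.
Qed.

Lemma submodular_compl f : submodular_fn f -> submodular_fn (fun A => f (~: A)).
Proof. by move=> f_sub A B /=; rewrite setCI setCU addrC; apply: f_sub. Qed.

Lemma submod_le_cosingletons f S : submodular_fn f ->
  f S <= f [set: 'I_n] + \sum_(i in ~: S) (f (~: [set i]) - f [set: 'I_n]).
Proof.
move=> /submodular_compl/(submod_le_singletons (~: S)).
by rewrite /= setCK setC0.
Qed.

End ModularUpperBounds.

Section FeasibleDistributions.
Variables (R : realType) (n : nat) (x : 'I_n -> R) (th : {set 'I_n} -> R).
Hypothesis th_feas : feasible_plus x th.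
Implicit Types (f : {set 'I_n} -> R) (S : {set 'I_n}).

Lemma expect_const c : \sum_S th S * c = c.
Proof. by case: th_feas => _ th1 _; rewrite -mulr_suml th1 mul1r. Qed.

Lemma expect_modular c (g : 'I_n -> R) :
  \sum_S th S * (c + \sum_(i in S) g i) = c + \sum_i x i * g i.
Proof.
case: th_feas => _ _ th_marg.
under eq_bigr do rewrite mulrDr mulr_sumr.
rewrite big_split /= expect_const; congr (_ + _).
rewrite (exchange_big_dep predT) //=; apply: eq_bigr => i _.
by rewrite -th_marg mulr_suml; apply: eq_bigr => S _; rewrite mulrC.
Qed.

Lemma objective_le f U : (forall S, f S <= U S) ->
  objective f th <= \sum_S th S * U S.
Proof.
case: th_feas => th_ge0 _ _ fU.
by apply: ler_sum => S _; apply: ler_wpM2l.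
Qed.

Lemma objective_le_top f : monotone_fn f -> objective f th <= f [set: 'I_n].
Proof.
move=> f_mono; rewrite -[X in _ <= X]expect_const.
by apply: objective_le => S; apply/f_mono/subsetT.
Qed.

Lemma objective_le_modular f : submodular_fn f ->
  objective f th <= f set0 + \sum_i x i * (f [set i] - f set0).
Proof.
move=> f_sub; rewrite -expect_modular.
by apply: objective_le => S; apply: submod_le_singletons.
Qed.

Lemma objective_le_comodular f : submodular_fn f ->
  objective f th <=
  f [set: 'I_n] + \sum_i (1 - x i) * (f (~: [set i]) - f [set: 'I_n]).
Proof.
move=> f_sub; set h := fun i => f (~: [set i]) - f [set: 'I_n].
have split_compl S : f [set: 'I_n] + \sum_(i in ~: S) h i =
    (f [set: 'I_n] + \sum_i h i) + \sum_(i in S) - h i.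
  rewrite (bigID (mem S) predT) sumrN /=.
  by rewrite (eq_bigl (fun i => i \notin S)) => [|i]; rewrite ?inE //; ring.
apply: le_trans (objective_le (fun S => submod_le_cosingletons S f_sub)) _.
under eq_bigr do rewrite split_compl.
rewrite expect_modular -addrA -big_split /=.
by rewrite (eq_bigr (fun i => (1 - x i) * h i)) // => i _; ring.
Qed.

End FeasibleDistributions.

Section LayeredDistributions.
Variables (R : realType) (n : nat).
Implicit Types (S : {set 'I_n}) (T : 'I_n -> {set 'I_n}) (h : {set 'I_n} -> R).

Definition layered_distr (a b p : R) T S : R :=
  a * (S == set0)%:R + b * (S == [set: 'I_n])%:R + p * \sum_k (S == T k)%:R.

Lemma sum_point_mass (A : {set 'I_n}) h : \sum_S (S == A)%:R * h S = h A.
Proof.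
rewrite (bigD1 A) //= eqxx mul1r big1 ?addr0 // => S /negPf ->.
by rewrite mul0r.
Qed.

Lemma sum_layered a b p T h : \sum_S layered_distr a b p T S * h S =
  a * h set0 + b * h [set: 'I_n] + p * \sum_k h (T k).
Proof.
under eq_bigr do rewrite /layered_distr !mulrDl -!mulrA mulr_suml mulr_sumr.
rewrite !big_split /= -!mulr_sumr !sum_point_mass (exchange_big_dep predT) //=.
rewrite mulr_sumr; congr (_ + _); apply: eq_bigr => k _.
by rewrite -mulr_sumr sum_point_mass.
Qed.

Lemma sumr_pred_indicator (P : pred {set 'I_n}) h :
  \sum_(S | P S) h S = \sum_S h S * (P S)%:R.
Proof.
by rewrite big_mkcond; apply: eq_bigr => S _; case: (P S); rewrite ?mulr1 ?mulr0.
Qed.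

Lemma feasible_pplus_layered (x a b p : R) T :
  0 <= a -> 0 <= b -> 0 <= p -> a + b + p * n%:R = 1 ->
  (forall i, b + p * \sum_k (i \in T k)%:R = x) ->
  (forall i j, i != j ->
     b + p * \sum_k ((i \in T k) && (j \in T k))%:R = x ^+ 2) ->
  feasible_pplus (fun _ => x) (layered_distr a b p T).
Proof.
move=> a_ge0 b_ge0 p_ge0 total marg pair; split; first split.
- move=> S; rewrite /layered_distr.
  by rewrite !addr_ge0 ?mulr_ge0 ?sumr_ge0 // => k _; rewrite ler0n.
- under eq_bigr do rewrite -[layered_distr _ _ _ _ _]mulr1.
  by rewrite sum_layered sumr_const card_ord !mulr1.
- by move=> i; rewrite sumr_pred_indicator sum_layered !inE /= -(marg i); ring.
- move=> i j lt_ij; have ne_ij : i != j by rewrite neq_ltn lt_ij.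
  by rewrite sumr_pred_indicator sum_layered !inE /= -expr2 -(pair i j) //; ring.
Qed.

Lemma count_mem_set1 (i : 'I_n) : \sum_k (i \in [set k])%:R = 1 :> R.
Proof.
rewrite (bigD1 i) //= inE eqxx big1 ?addr0 // => k k_ne_i.
by rewrite inE eq_sym (negPf k_ne_i).
Qed.

Lemma count_mem2_set1 (i j : 'I_n) : i != j ->
  \sum_k ((i \in [set k]) && (j \in [set k]))%:R = 0 :> R.
Proof.
move=> ne_ij; rewrite big1 // => k _; rewrite !inE.
by case: eqP => [<-|] //=; rewrite eq_sym (negPf ne_ij).
Qed.

Lemma count_mem_setC1 (i : 'I_n) : \sum_k (i \in ~: [set k])%:R = n%:R - 1 :> R.
Proof.
transitivity (\sum_(k < n) (1 - (i \in [set k])%:R : R)).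
  by apply: eq_bigr => k _; rewrite !inE; case: (i == k); rewrite ?subrr ?subr0.
by rewrite sumrB sumr_const card_ord count_mem_set1.
Qed.

Lemma count_mem2_setC1 (i j : 'I_n) : i != j ->
  \sum_k ((i \in ~: [set k]) && (j \in ~: [set k]))%:R = n%:R - 2 :> R.
Proof.
move=> ne_ij.
transitivity (\sum_(k < n) (1 - (i \in [set k])%:R - (j \in [set k])%:R : R)).
  apply: eq_bigr => k _; rewrite !inE; case: (eqVneq i k) => [<-|_] /=.
    by rewrite eq_sym (negPf ne_ij) subrr subr0.
  by case: (j == k) => /=; ring.
by rewrite !sumrB sumr_const card_ord !count_mem_set1; ring.
Qed.

Lemma layered_singletons_feasible (x : R) : 0 <= x <= 1 -> (n%:R - 1) * x <= 1 ->
  feasible_pplus (fun _ => x) (layered_distr ((1 - x) * (1 - (n%:R - 1) * x))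
    (x ^+ 2) (x - x ^+ 2) (fun k => [set k])).
Proof.
move=> /andP[x_ge0 x_le1] small; apply: feasible_pplus_layered.
- by apply: mulr_ge0; lra.
- exact: sqr_ge0.
- by rewrite subr_ge0 expr2 ler_piMr.
- by ring.
- by move=> i; rewrite count_mem_set1; ring.
- by move=> i j ne_ij; rewrite count_mem2_set1 //; ring.
Qed.

Lemma layered_cosingletons_feasible (x : R) : 0 <= x <= 1 ->
  n%:R - 2 <= (n%:R - 1) * x ->
  feasible_pplus (fun _ => x) (layered_distr ((1 - x) ^+ 2)
    ((n%:R - 1) * x ^+ 2 - (n%:R - 2) * x) (x - x ^+ 2) (fun k => ~: [set k])).
Proof.
move=> /andP[x_ge0 x_le1] large; apply: feasible_pplus_layered.
- exact: sqr_ge0.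
- have : 0 <= x * ((n%:R - 1) * x - (n%:R - 2)) by apply: mulr_ge0; lra.
  by nra.
- by rewrite subr_ge0 expr2 ler_piMr.
- by ring.
- by move=> i; rewrite count_mem_setC1; ring.
- by move=> i j ne_ij; rewrite count_mem2_setC1 //; ring.
Qed.

End LayeredDistributions.

Section Arithmetic.
Variable R : realType.

Lemma four_thirds_bottom (x f0 F G o : R) : 0 <= x <= 1 -> 0 <= f0 -> f0 <= F ->
  F - f0 <= G -> o <= f0 + x * G -> o <= F ->
  o <= 4 / 3 * (f0 + (x - x ^+ 2) * G + x ^+ 2 * (F - f0)).
Proof.
move=> /andP[x_ge0 x_le1] f0_ge0 f0_le_F G_ge o_le_mod o_le_F.
have xG_ge0 : 0 <= x * G by apply: mulr_ge0; lra.
have [xG_le|xG_gt] := lerP (x * G) (F - f0).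
- have P1 : 0 <= x ^+ 2 * ((F - f0) - x * G) by apply: mulr_ge0; [exact: sqr_ge0|lra].
  have P2 : 0 <= (x - 1 / 2) ^+ 2 * (x * G) by apply: mulr_ge0 => //; exact: sqr_ge0.
  nra.
- have P1 : 0 <= (1 - x) * (x * G - (F - f0)) by apply: mulr_ge0; lra.
  have P2 : 0 <= (x - 1 / 2) ^+ 2 * (F - f0) by apply: mulr_ge0; [exact: sqr_ge0|lra].
  nra.
Qed.

Lemma four_thirds_top (x f0 F D o : R) : 1 / 2 <= x <= 1 -> 0 <= f0 -> 0 <= D ->
  D <= F - f0 -> o <= F - (1 - x) * D ->
  o <= 4 / 3 * (F - (1 - x) ^+ 2 * (F - f0) - x * (1 - x) * D).
Proof.
move=> /andP[x_ge x_le1] f0_ge0 D_ge0 D_le o_le.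
have [quarter|quarter] := lerP 0 (4 * x - 3).
- have P1 : 0 <= (1 - x) * (4 * x - 3) * ((F - f0) - D).
    by apply: mulr_ge0; [apply: mulr_ge0|]; lra.
  have P2 : 0 <= x * (F - f0) by apply: mulr_ge0; lra.
  nra.
- have P1 : 0 <= (1 - x) * D * (3 - 4 * x) by apply: mulr_ge0; [apply: mulr_ge0|]; lra.
  have P2 : 0 <= (2 * x - 1) * (3 - 2 * x) * (F - f0).
    by apply: mulr_ge0; [apply: mulr_ge0|]; lra.
  nra.
Qed.

End Arithmetic.

Lemma concave_closure_le_scaled (R : realType) (n : nat) (f : {set 'I_n} -> R)
    (x : 'I_n -> R) (th0 : {set 'I_n} -> R) (c : R) :
  monotone_fn f -> 0 <= c -> feasible_pplus x th0 ->
  (forall th, feasible_plus x th -> objective f th <= c * objective f th0) ->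
  concave_closure f x <= c * upper_pairwise_ext f x.
Proof.
move=> f_mono c_ge0 th0_feas le_th0.
apply: (@le_trans _ _ (c * objective f th0)).
  apply: ge_sup; first by exists (objective f th0), th0; case: th0_feas.
  by move=> _ [th [th_feas ->]]; exact: le_th0.
rewrite ler_wpM2l //; apply: sup_upper_bound; last by exists th0.
split; first by exists (objective f th0), th0.
exists (f [set: 'I_n]) => _ [th [[th_feas _] ->]].
exact (objective_le_top th_feas f_mono).
Qed.

Section FourThirdsBound.
Variables (R : realType) (n : nat) (f : {set 'I_n} -> R).
Hypotheses (f_ge0 : nonneg_fn f) (f_mono : monotone_fn f) (f_sub : submodular_fn f).

Lemma four_thirds_small_x (x : R) : 0 <= x <= 1 -> (n%:R - 1) * x <= 1 ->
  concave_closure f (fun _ => x) <= 4 / 3 * upper_pairwise_ext f (fun _ => x).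
Proof.
move=> x01 small.
apply: concave_closure_le_scaled f_mono _ (layered_singletons_feasible x01 small) _.
  lra.
move=> th th_feas; rewrite /objective sum_layered.
have G_ge : f [set: 'I_n] - f set0 <= \sum_i (f [set i] - f set0).
  have := submod_le_singletons [set: 'I_n] f_sub.
  under eq_bigl do rewrite inE.
  lra.
set f0 := f set0; set F := f [set: 'I_n].
set G := \sum_i (f [set i] - f0).
have -> : (1 - x) * (1 - (n%:R - 1) * x) * f0 + x ^+ 2 * F +
    (x - x ^+ 2) * \sum_k f [set k] = f0 + (x - x ^+ 2) * G + x ^+ 2 * (F - f0).
  by rewrite /G sumrB sumr_const card_ord; ring.
apply: four_thirds_bottom => //.
- exact: f_ge0.
- exact: f_mono (sub0set _).
- by rewrite /G mulr_sumr; exact: (objective_le_modular th_feas f_sub).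
- exact: (objective_le_top th_feas f_mono).
Qed.

Lemma four_thirds_large_x (x : R) : 1 / 2 <= x <= 1 -> n%:R - 2 <= (n%:R - 1) * x ->
  concave_closure f (fun _ => x) <= 4 / 3 * upper_pairwise_ext f (fun _ => x).
Proof.
move=> x_half large; have x01 : 0 <= x <= 1 by apply/andP; lra.
apply: concave_closure_le_scaled f_mono _ (layered_cosingletons_feasible x01 large) _.
  lra.
move=> th th_feas; rewrite /objective sum_layered.
set f0 := f set0; set F := f [set: 'I_n].
set D := \sum_i (F - f (~: [set i])).
have sum_compl : \sum_i (f (~: [set i]) - F) = - D.
  by rewrite /D -sumrN; apply: eq_bigr => i _; ring.
have D_le : D <= F - f0.
  have := submod_le_cosingletons set0 f_sub.
  under eq_bigl do rewrite !inE /=.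
  rewrite -/f0 -/F sum_compl; lra.
have D_ge0 : 0 <= D.
  by apply: sumr_ge0 => i _; rewrite subr_ge0; exact: f_mono (subsetT _).
have -> : (1 - x) ^+ 2 * f0 + ((n%:R - 1) * x ^+ 2 - (n%:R - 2) * x) * F +
    (x - x ^+ 2) * \sum_k f (~: [set k]) =
    F - (1 - x) ^+ 2 * (F - f0) - x * (1 - x) * D.
  by rewrite /D sumrB sumr_const card_ord; ring.
apply: four_thirds_top => //.
- exact: f_ge0.
- have := objective_le_comodular th_feas f_sub.
  by rewrite -/F -mulr_sumr sum_compl mulrN.
Qed.

End FourThirdsBound.

Theorem mainTheorem13 (R : realType) (n : nat) (f : {set 'I_n} -> R) (x : R) :
  (2 <= n)%N ->
  nonneg_fn f -> monotone_fn f -> submodular_fn f ->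
  0 <= x <= 1 ->
  (x <= 1 / (n%:R - 1) \/ (n%:R - 2) / (n%:R - 1) <= x) ->
  let xv := fun _ : 'I_n => x in
  (* f^+(x) / f^++(x) <= 4/3 with 0/0 = 1, written without division *)
  concave_closure f xv <= 4 / 3 * upper_pairwise_ext f xv.
Proof.
move=> n_ge2 f_ge0 f_mono f_sub x01 x_extreme /=.
have n1_gt0 : 0 < n%:R - 1 :> R by rewrite subr_gt0 ltr1n.
rewrite ler_pdivlMr // ler_pdivrMr // ![x * _]mulrC in x_extreme.
have [small|large] := lerP ((n%:R - 1) * x) 1.
  exact: four_thirds_small_x.
case: x_extreme => [small'|large']; first by lra.
by apply: four_thirds_large_x => //; apply/andP; split; nra.
Qed.
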